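(* Let $\mathcal{U}\subset\mathbb{R}^d$ be a nonempty box $\{u:u_{\min}\le u\le u_{\max}\}$, let $L:\mathbb{R}^d\to\mathbb{R}$ be measurable, $u^*\in\mathcal{U}$, and let $\lambda^{\min},\lambda^{\max}>0$, $\eta\ge0$ be constants such that for all $u\in\mathcal{U}$ $$\lambda^{\min}|u-u^*|^2\le L(u)-L(u^* )\le\eta|u-u^*|+\lambda^{\max}|u-u^*|^2 .$$ Let $f$ be a probability measure on $\mathbb{R}^d$ supported in $\mathcal{U}$ with $u^*\in\operatorname{supp}(f)$, and fix $\alpha>0$. Then for every $\varepsilon>0$ and every $R_\varepsilon>0$ with $$R_\varepsilon\le\min\Big\{\varepsilon^2\frac{\lambda^{\min}}{8(\lambda^{\max}+\eta)},\,1\Big\},$$ it holds $$\big|m^\alpha_L[f]-u^*\big|\le\frac{\varepsilon}{2}+\frac{\exp\!\big(-\alpha\lambda^{\min}(\varepsilon/4)^2\big)}{f(B_{R_\varepsilon}(u^* ))}\,\mathrm{V}^*[f].$$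
   Context: For a probability measure $f$ on $\mathbb{R}^d$, $m^\alpha_L[f]:=\dfrac{\int u\,e^{-\alpha L(u)}f(du)}{\int e^{-\alpha L(u)}f(du)}$ and $\mathrm{V}^*[f]:=\int|u-u^*|\,f(du)$. $B_R(v)$ is the closed Euclidean ball of radius $R$ centered at $v$. In the paper, $L=L_n$ is the MPC loss, $u^*=u^*_{(n)}$, $\lambda^{\min},\lambda^{\max}$ are the extreme eigenvalues of $F_c^\top F_c+\nu I_d$ and $\eta=|\eta^{1,*}_{(n)}|+|\eta^{2,*}_{(n)}|$ is the sum of norms of the Lagrange multipliers. *)

(* R^d is modelled as d.-tuple R, which
   MathComp-Analysis equips with the product (= Borel) sigma-algebra. *)
From HB Require Import structures.
From mathcomp Require Import all_boot all_order all_algebra.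
From mathcomp Require Import all_classical all_reals all_analysis.
Set Implicit Arguments. Unset Strict Implicit. Unset Printing Implicit Defensive.
Import Order.TTheory GRing.Theory Num.Theory.
Local Open Scope classical_set_scope.
Local Open Scope ring_scope.

Definition eucl_dist (R : realType) (d : nat) (u v : d.-tuple R) : R :=
  Num.sqrt (\sum_(i < d) (tnth u i - tnth v i) ^+ 2).

Definition eucl_ball (R : realType) (d : nat) (v : d.-tuple R) (r : R) : set (d.-tuple R) :=
  [set u | eucl_dist u v <= r].

Definition ubox (R : realType) (d : nat) (umin umax : d.-tuple R) : set (d.-tuple R) :=
  [set u | forall i : 'I_d, tnth umin i <= tnth u i <= tnth umax i].

Definition consensus_point (R : realType) (d : nat)
    (f : probability (d.-tuple R) R) (L : d.-tuple R -> R) (alpha : R) : d.-tuple R :=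
  [tuple (Rintegral f setT (fun u => tnth u i * expR (- alpha * L u))
          / Rintegral f setT (fun u => expR (- alpha * L u))) | i < d].

Definition Vstar (R : realType) (d : nat)
    (f : probability (d.-tuple R) R) (ustar : d.-tuple R) : R :=
  Rintegral f setT (fun u => eucl_dist u ustar).

(* Write w = exp(-alpha L) and Z = \int_U w df.  The consensus point m is the w-weighted mean of f
   and Z (m - ustar) = \int (u - ustar) w df, so by Cauchy-Schwarz
   Z |m - ustar| <= \int |u - ustar| w df.  Split this integral at |u - ustar| = eps/2: inside, it
   is at most (eps/2) Z; outside, the quadratic lower bound on L - L(ustar) gives
   w <= e^{-alpha L(ustar)} e^{-alpha lmin (eps/2)^2}.  The upper bound on L - L(ustar) gives
   w >= e^{-alpha L(ustar)} e^{-alpha (eta R + lmax R^2)} on B_R(ustar), hence a lower bound on Z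
   in terms of f(B_R(ustar)).  The constraint on R makes the ratio of the two exponentials at most
   exp(-alpha lmin (eps/4)^2). *)

From HB Require Import structures.
From mathcomp Require Import all_boot all_order all_algebra.
From mathcomp Require Import all_classical all_reals all_analysis.
From mathcomp Require Import measurable_realfun ring lra.
Import Order.TTheory GRing.Theory Num.Theory.
Import numFieldNormedType.Exports.
Local Open Scope classical_set_scope.
Local Open Scope ring_scope.
Set Implicit Arguments. Unset Strict Implicit. Unset Printing Implicit Defensive.

Lemma sum_mul_le_sqrt (R : rcfType) (I : finType) (x y : I -> R) :
  \sum_i x i * y i <= Num.sqrt (\sum_i x i ^+ 2) * Num.sqrt (\sum_i y i ^+ 2).
Proof.
set A := \sum_i x i ^+ 2; set B := \sum_i x i * y i; set C := \sum_i y i ^+ 2.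
have A_ge0 : 0 <= A by rewrite sumr_ge0 // => i _; exact: sqr_ge0.
have C_ge0 : 0 <= C by rewrite sumr_ge0 // => i _; exact: sqr_ge0.
suff B2_le : B ^+ 2 <= A * C.
  rewrite -sqrtrM // (le_trans (ler_norm B)) // -sqrtr_sqr ler_sqrt //.
  exact: mulr_ge0.
have [A0 | A_neq0] := eqVneq A 0.
  have x0 i : x i = 0.
    apply/eqP; rewrite -sqrf_eq0; apply/eqP.
    by apply: (psumr_eq0P _ A0) => // j _; exact: sqr_ge0.
  by rewrite /B big1 ?expr0n ?A0 ?mul0r // => i _; rewrite x0 mul0r.
have A_gt0 : 0 < A by rewrite lt0r A_neq0.
have : 0 <= \sum_i (A * y i - B * x i) ^+ 2 by rewrite sumr_ge0 // => i _; exact: sqr_ge0.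
rewrite (eq_bigr (fun i => A ^+ 2 * y i ^+ 2 - 2 * A * B * (x i * y i)
                           + B ^+ 2 * x i ^+ 2)); last by move=> i _; ring.
rewrite big_split sumrB /= -!mulr_sumr -/A -/B -/C.
have -> : A ^+ 2 * C - 2 * A * B * B + B ^+ 2 * A = A * (A * C - B ^+ 2) by ring.
by rewrite pmulr_rge0 // subr_ge0.
Qed.

Section euclidean.
Variables (R : realType) (d : nat).
Implicit Types (u v a b : d.-tuple R).

Lemma eucl_dist_ge0 u v : 0 <= eucl_dist u v.
Proof. exact: sqrtr_ge0. Qed.

Lemma measurable_eucl_dist v : measurable_fun setT (fun u => eucl_dist u v).
Proof.
rewrite /eucl_dist; apply: measurableT_comp.
  exact: continuous_measurable_fun (@sqrt_continuous R).
apply: measurable_sum => i; apply: measurable_funX.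
by apply: measurable_funB => //; exact: measurable_tnth.
Qed.

Lemma measurable_eucl_ball v r : measurable (eucl_ball v r).
Proof.
have := measurable_fun_le measurableT (measurable_eucl_dist v) (measurable_cst r).
by rewrite setTI.
Qed.

Lemma measurable_ubox a b : measurable (ubox a b).
Proof.
have -> : ubox a b = \bigcap_(i in [set: 'I_d])
    (setT `&` ((fun u : d.-tuple R => tnth u i) @^-1` `[tnth a i, tnth b i])).
  apply/seteqP; split => u /=.
    by move=> abu i _; split => //=; rewrite in_itv /= abu.
  by move=> abu i; have [_ /=] := abu i I; rewrite in_itv.
apply: fin_bigcap_measurable; first exact: finite_finset.
by move=> i _; apply: measurable_tnth => //; exact: measurable_itv.
Qed.

Lemma ubox_norm_le a b u i :
  ubox a b u -> `|tnth u i| <= `|tnth a i| + `|tnth b i|.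
Proof.
move=> /(_ i) /andP[au ub]; rewrite ler_norml.
have := ler_norm (tnth b i); have := ler_norm (- tnth a i); rewrite normrN.
have := normr_ge0 (tnth a i); have := normr_ge0 (tnth b i).
by move=> *; apply/andP; split; lra.
Qed.

Lemma eucl_dist_le_sqrt_sum u v (M : 'I_d -> R) :
  (forall i, `|tnth u i - tnth v i| <= M i) ->
  eucl_dist u v <= Num.sqrt (\sum_i M i ^+ 2).
Proof.
move=> uvM; rewrite ler_sqrt; last by rewrite sumr_ge0 // => i _; exact: sqr_ge0.
apply: ler_sum => i _; rewrite -real_normK ?num_real // !expr2.
by apply: ler_pM; rewrite ?normr_ge0 ?uvM.
Qed.

End euclidean.

Section conull.
Context (dT : measure_display) (T : measurableType dT) (R : realType).
Variables (mu : {measure set T -> \bar R}) (A : set T).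
Hypotheses (mA : measurable A) (muAC : mu (~` A) = 0%E).

Lemma measureIl_conull B : measurable B -> mu (A `&` B) = mu B.
Proof.
move=> mB; rewrite [RHS](measureDI mu mB mA) setIC.
set BA := (X in (X + _)%E); suff -> : BA = 0%E by rewrite add0e.
apply/eqP; rewrite eq_le measure_ge0 andbT -muAC.
by apply: le_measure; rewrite ?inE; [exact: measurableD|exact: measurableC|move=> x []].
Qed.

Lemma Rintegral_setT_conull g :
  measurable_fun setT g -> \int[mu]_x g x = \int[mu]_(x in A) g x.
Proof.
move=> mg; rewrite [RHS]Rintegral_mkcond; congr fine.
apply: (ae_eq_integral (EFin \o g \_ A)) => //.
- exact/measurable_EFinP.
- apply/measurable_EFinP/(measurable_restrict _ mA measurableT).
  exact: measurable_funS mg.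
- exists (~` A); split => //; first exact: measurableC.
  by move=> x /= gx Ax; apply: gx => _; rewrite patchT // inE.
Qed.

End conull.

Section finite_measure.
Context (dT : measure_display) (T : measurableType dT) (R : realType).
Variable mu : {finite_measure set T -> \bar R}.

Lemma integrable_bounded (A : set T) (h : T -> R) (M : R) :
  measurable A -> measurable_fun setT h -> (forall x, A x -> `|h x| <= M) ->
  mu.-integrable A (EFin \o h).
Proof.
move=> mA mh hM; apply: measurable_bounded_integrable => //.
- by rewrite ltey_eq fin_num_measure.
- exact: measurable_funS mh.
- exists M; split; first exact: num_real.
  by move=> y My x Ax; apply: le_trans (hM x Ax) _; exact: ltW.
Qed.

Lemma Rintegral_ge_cst (A B : set T) (w : T -> R) (K : R) :
  measurable A -> measurable B -> mu.-integrable A (EFin \o w) ->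
  (forall x, A x -> 0 <= w x) -> (forall x, A x -> B x -> K <= w x) ->
  K * fine (mu (A `&` B)) <= \int[mu]_(x in A) w x.
Proof.
move=> mA mB iw w_ge0 Kw.
rewrite -Rintegral_cst; last exact: measurableI.
rewrite Rintegral_mkcondr; apply: le_Rintegral => //.
  apply: (integrable_bounded (M := `|K|)) => //.
    by apply/(measurable_restrict _ mB measurableT); exact: measurable_cst.
  by move=> x _; rewrite patchE; case: ifP; rewrite ?normr0.
by move=> x Ax; rewrite patchE; case: ifPn => [/set_mem|_]; [exact: Kw|exact: w_ge0].
Qed.

End finite_measure.

Section Rintegral_linear.
Context (dT : measure_display) (T : measurableType dT) (R : realType).
Variables (mu : {measure set T -> \bar R}) (D : set T).
Hypothesis mD : measurable D.

Lemma integrableZl_EFin (k : R) (g : T -> R) : mu.-integrable D (EFin \o g) ->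
  mu.-integrable D (EFin \o (fun x => k * g x)).
Proof.
move=> ig; apply: (eq_integrable mD _ _ _ (integrableZl mD k ig)) => x _.
by rewrite /= EFinM.
Qed.

Lemma integrableD_EFin (g h : T -> R) :
  mu.-integrable D (EFin \o g) -> mu.-integrable D (EFin \o h) ->
  mu.-integrable D (EFin \o (fun x => g x + h x)).
Proof.
move=> ig ih; apply: (eq_integrable mD _ _ _ (integrableD mD ig ih)) => x _.
by rewrite /= EFinD.
Qed.

Lemma Rintegral_sum (I : Type) (s : seq I) (h : I -> T -> R) :
  (forall i, mu.-integrable D (EFin \o h i)) ->
  \int[mu]_(x in D) (\sum_(i <- s) h i x) = \sum_(i <- s) \int[mu]_(x in D) h i x.
Proof.
move=> ih; rewrite /Rintegral sum_fine => [|i _]; last exact: integrable_fin_num (ih i).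
rewrite -(integral_sum mD ih); congr fine.
by apply: eq_integral => x _; rewrite sumEFin.
Qed.

End Rintegral_linear.

Definition weighted_mean (R : realType) (d : nat) (f : probability (d.-tuple R) R)
    (w : d.-tuple R -> R) : d.-tuple R :=
  [tuple \int[f]_u (tnth u i * w u) / \int[f]_u w u | i < d].

Section weighted_mean.
Variables (R : realType) (d : nat) (f : probability (d.-tuple R) R).
Variables (A : set (d.-tuple R)) (M : 'I_d -> R) (w : d.-tuple R -> R) (W : R).
Variable v : d.-tuple R.
Hypotheses (mA : measurable A) (fAC : f (~` A) = 0%E).
Hypothesis A_bounded : forall u i, A u -> `|tnth u i| <= M i.
Hypotheses (mw : measurable_fun setT w) (w_ge0 : forall u, A u -> 0 <= w u).
Hypothesis w_le : forall u, A u -> w u <= W.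

Let Z := \int[f]_(u in A) w u.

Let coord_dist_le u (i : 'I_d) : A u -> `|tnth u i - tnth v i| <= M i + `|tnth v i|.
Proof. by move=> Au; apply: le_trans (ler_normB _ _) _; rewrite lerD2r A_bounded. Qed.

Let dist_le u : A u -> `|eucl_dist u v| <= Num.sqrt (\sum_i (M i + `|tnth v i|) ^+ 2).
Proof.
move=> Au; rewrite ger0_norm ?eucl_dist_ge0 //.
by apply: eucl_dist_le_sqrt_sum => i; exact: coord_dist_le.
Qed.

Let integrable_weighted (g : d.-tuple R -> R) (G : R) :
  measurable_fun setT g -> (forall u, A u -> `|g u| <= G) ->
  f.-integrable A (EFin \o (fun u => g u * w u)).
Proof.
move=> mg gG; apply: (integrable_bounded f (M := G * W)) => //.
  exact: measurable_funM.
move=> u Au; rewrite normrM (ger0_norm (w_ge0 Au)).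
by apply: ler_pM => //; [exact: w_ge0 | exact: gG | exact: w_le].
Qed.

Let integrable_weight : f.-integrable A (EFin \o w).
Proof.
apply: (integrable_bounded f (M := W)) => // u Au.
by rewrite ger0_norm ?w_le ?w_ge0.
Qed.

Let measurable_coord_weight (i : 'I_d) :
  measurable_fun setT (fun u : d.-tuple R => tnth u i * w u).
Proof. by apply: measurable_funM => //; exact: measurable_tnth. Qed.

Let integrable_coord_weight (i : 'I_d) :
  f.-integrable A (EFin \o (fun u => tnth u i * w u)).
Proof. exact: integrable_weighted (measurable_tnth i) (fun u => @A_bounded u i). Qed.

Let integrable_coord_diff_weight (i : 'I_d) :
  f.-integrable A (EFin \o (fun u => (tnth u i - tnth v i) * w u)).
Proof.
apply: (integrable_weighted (G := M i + `|tnth v i|)) => [|u /coord_dist_le //].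
by apply: measurable_funB => //; exact: measurable_tnth.
Qed.

Let integrable_dist : f.-integrable A (EFin \o (fun u => eucl_dist u v)).
Proof. exact (integrable_bounded f mA (measurable_eucl_dist v) dist_le). Qed.

Let integrable_dist_weight :
  f.-integrable A (EFin \o (fun u => eucl_dist u v * w u)).
Proof. exact: integrable_weighted (measurable_eucl_dist v) dist_le. Qed.

Lemma weighted_mean_coordE (i : 'I_d) : Z != 0 ->
  Z * (tnth (weighted_mean f w) i - tnth v i) =
  \int[f]_(u in A) ((tnth u i - tnth v i) * w u).
Proof.
move=> Z_neq0; rewrite tnth_mktuple (Rintegral_setT_conull mA fAC mw).
rewrite (Rintegral_setT_conull mA fAC (measurable_coord_weight i)) -/Z.
under [RHS]eq_Rintegral do rewrite mulrBl.
rewrite RintegralB ?RintegralZl ?integrableZl_EFin //.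
by rewrite mulrBr mulrCA mulfV // mulr1 [Z * _]mulrC.
Qed.

Lemma weighted_mean_dist_le : 0 < Z ->
  Z * eucl_dist (weighted_mean f w) v <= \int[f]_(u in A) (eucl_dist u v * w u).
Proof.
move=> Z_gt0; pose x i := tnth (weighted_mean f w) i - tnth v i.
have -> : eucl_dist (weighted_mean f w) v = Num.sqrt (\sum_i x i ^+ 2) by [].
set n := Num.sqrt _.
have [n0 | n_neq0] := eqVneq n 0.
  rewrite n0 mulr0; apply: Rintegral_ge0 => u Au.
  by rewrite mulr_ge0 ?eucl_dist_ge0 ?w_ge0.
have n_gt0 : 0 < n by rewrite lt0r n_neq0 sqrtr_ge0.
pose h i u := x i * ((tnth u i - tnth v i) * w u).
have ih i : f.-integrable A (EFin \o h i) by exact: integrableZl_EFin.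
have Zn2 : Z * n ^+ 2 = \int[f]_(u in A) (\sum_i h i u).
  rewrite Rintegral_sum // sqr_sqrtr ?sumr_ge0 // => [|i _]; last exact: sqr_ge0.
  rewrite mulr_sumr; apply: eq_bigr => i _.
  by rewrite RintegralZl // -weighted_mean_coordE ?gt_eqF // /x; ring.
suff : Z * n ^+ 2 <= n * \int[f]_(u in A) (eucl_dist u v * w u).
  by rewrite expr2 mulrCA ler_pM2l.
rewrite Zn2 -RintegralZl //; apply: le_Rintegral; rewrite ?integrableZl_EFin //.
  apply: (eq_integrable mA _ _ _ (integrable_sum mA (index_enum 'I_d) (P := predT) (fun i _ => ih i))).
  by move=> u _ /=; rewrite sumEFin.
move=> u Au; rewrite /h (eq_bigr (fun i => x i * (tnth u i - tnth v i) * w u)).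
  by rewrite -mulr_suml mulrA ler_wpM2r ?w_ge0 // sum_mul_le_sqrt.
by move=> i _; rewrite mulrA.
Qed.

Lemma Rintegral_dist_split (r c : R) : 0 <= r -> 0 <= c ->
  (forall u, A u -> r < eucl_dist u v -> w u <= c) ->
  \int[f]_(u in A) (eucl_dist u v * w u) <= r * Z + c * \int[f]_(u in A) eucl_dist u v.
Proof.
move=> r_ge0 c_ge0 wc.
rewrite -!RintegralZl // -RintegralD ?integrableZl_EFin //.
apply: le_Rintegral; rewrite ?integrableD_EFin ?integrableZl_EFin //.
move=> u Au; have D_ge0 := eucl_dist_ge0 u v; have w_ge0u := w_ge0 Au.
have [Dr | /(wc u Au) wu] := lerP (eucl_dist u v) r.
  have : eucl_dist u v * w u <= r * w u by rewrite ler_wpM2r.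
  have : 0 <= c * eucl_dist u v by rewrite mulr_ge0.
  lra.
have : eucl_dist u v * w u <= c * eucl_dist u v by rewrite mulrC ler_wpM2r.
have : 0 <= r * w u by rewrite mulr_ge0.
lra.
Qed.

Lemma weighted_mean_dist_le_ball (B : set (d.-tuple R)) (r c K : R) :
  measurable B -> 0 <= r -> 0 <= c -> 0 < K -> 0 < fine (f B) ->
  (forall u, A u -> r < eucl_dist u v -> w u <= c * K) ->
  (forall u, A u -> B u -> K <= w u) ->
  eucl_dist (weighted_mean f w) v <= r + c / fine (f B) * \int[f]_u eucl_dist u v.
Proof.
move=> mB r_ge0 c_ge0 K_gt0 fB_gt0 wc Kw.
have mass : K * fine (f B) <= Z.
  by rewrite -(measureIl_conull mA fAC mB); exact: Rintegral_ge_cst.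
have Z_gt0 : 0 < Z by apply: lt_le_trans mass; rewrite mulr_gt0.
rewrite (Rintegral_setT_conull mA fAC (measurable_eucl_dist v)) -(ler_pM2l Z_gt0).
apply: le_trans (weighted_mean_dist_le Z_gt0) _.
apply: le_trans (Rintegral_dist_split r_ge0 (mulr_ge0 c_ge0 (ltW K_gt0)) wc) _.
rewrite mulrDr [Z * r]mulrC lerD2l.
have -> : Z * (c / fine (f B) * \int[f]_(u in A) eucl_dist u v) =
          c * (Z / fine (f B)) * \int[f]_(u in A) eucl_dist u v by ring.
apply: ler_wpM2r; first by apply: Rintegral_ge0 => u _; exact: eucl_dist_ge0.
by rewrite ler_wpM2l // ler_pdivlMr.
Qed.

End weighted_mean.

Section gibbs_weight.
Variables (R : realType) (T : Type) (A : set T) (L D : T -> R) (ustar : T).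
Variables (lmin lmax eta alpha : R).
Hypotheses (alpha_ge0 : 0 <= alpha) (lmin_ge0 : 0 <= lmin).
Hypotheses (lmax_ge0 : 0 <= lmax) (eta_ge0 : 0 <= eta) (D_ge0 : forall u, 0 <= D u).
Hypothesis L_growth : forall u, A u ->
  lmin * D u ^+ 2 <= L u - L ustar /\ L u - L ustar <= eta * D u + lmax * D u ^+ 2.

Lemma gibbs_weight_le (r : R) u : A u -> 0 <= r -> r <= D u ->
  expR (- alpha * L u) <= expR (- alpha * L ustar) * expR (- alpha * lmin * r ^+ 2).
Proof.
move=> Au r_ge0 rD; rewrite -expRD ler_expR.
have r2D2 : lmin * r ^+ 2 <= lmin * D u ^+ 2.
  by rewrite ler_wpM2l // !expr2 ler_pM // (le_trans r_ge0).
have : alpha * (lmin * r ^+ 2) <= alpha * (L u - L ustar).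
  by rewrite ler_wpM2l // (le_trans r2D2) // (L_growth Au).1.
lra.
Qed.

Lemma gibbs_weight_ge (Rr : R) u : A u -> D u <= Rr ->
  expR (- alpha * L ustar) * expR (- alpha * (eta * Rr + lmax * Rr ^+ 2))
    <= expR (- alpha * L u).
Proof.
move=> Au DR; rewrite -expRD ler_expR; have D_ge0u := D_ge0 u.
have DR2 : eta * D u + lmax * D u ^+ 2 <= eta * Rr + lmax * Rr ^+ 2.
  by rewrite lerD ?ler_wpM2l // !expr2 ler_pM.
have : alpha * (L u - L ustar) <= alpha * (eta * Rr + lmax * Rr ^+ 2).
  by rewrite ler_wpM2l // (le_trans (L_growth Au).2).
lra.
Qed.

End gibbs_weight.

Lemma radius_exponent_gap (R : realType) (lmin lmax eta alpha eps Rr : R) :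
  0 < lmin -> 0 < lmax -> 0 <= eta -> 0 <= alpha -> 0 < Rr ->
  Rr <= Num.min (eps ^+ 2 * lmin / (8 * (lmax + eta))) 1 ->
  expR (- alpha * lmin * (eps / 2) ^+ 2)
    <= expR (- alpha * lmin * (eps / 4) ^+ 2) * expR (- alpha * (eta * Rr + lmax * Rr ^+ 2)).
Proof.
move=> lmin_gt0 lmax_gt0 eta_ge0 alpha_ge0 Rr_gt0.
rewrite le_min => /andP[Rr_le Rr_le1].
have lme_gt0 : 0 < lmax + eta by lra.
have Rr_eps : (lmax + eta) * Rr <= eps ^+ 2 * lmin / 8.
  rewrite mulrC -ler_pdivlMr //; apply: le_trans Rr_le _.
  by rewrite invfM mulrA.
have Rr2 : lmax * Rr ^+ 2 <= lmax * Rr.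
  apply: ler_wpM2l; first exact: ltW.
  by rewrite expr2 -{3}[Rr]mulr1 ler_pM2l.
rewrite -expRD ler_expR.
have : alpha * (eta * Rr + lmax * Rr ^+ 2) <= alpha * (eps ^+ 2 * lmin / 8).
  by rewrite ler_wpM2l //; lra.
have : 0 <= alpha * (eps ^+ 2 * lmin).
  by rewrite mulr_ge0 // mulr_ge0 ?sqr_ge0 // ltW.
lra.
Qed.

Theorem mainTheorem2 (R : realType) (d : nat) (umin umax : d.-tuple R)
  (L : d.-tuple R -> R) (ustar : d.-tuple R) (lmin lmax eta alpha : R)
  (f : probability (d.-tuple R) R) :
  (forall i : 'I_d, tnth umin i <= tnth umax i) ->
  measurable_fun setT L ->
  ubox umin umax ustar ->
  0 < lmin -> 0 < lmax -> 0 <= eta ->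
  (forall u, ubox umin umax u ->
     (lmin * eucl_dist u ustar ^+ 2 <= L u - L ustar)%R /\
     (L u - L ustar <= eta * eucl_dist u ustar + lmax * eucl_dist u ustar ^+ 2)%R) ->
  f (~` ubox umin umax) = 0%E ->
  (forall r : R, 0 < r -> (0 < f (eucl_ball ustar r))%E) ->
  0 < alpha ->
  forall eps Reps : R, 0 < eps -> 0 < Reps ->
  Reps <= Num.min (eps ^+ 2 * lmin / (8 * (lmax + eta))) 1 ->
  eucl_dist (consensus_point f L alpha) ustar
    <= eps / 2 + expR (- alpha * lmin * (eps / 4) ^+ 2)
                 / fine (f (eucl_ball ustar Reps)) * Vstar f ustar.
Proof.
move=> _ mL _ lmin_gt0 lmax_gt0 eta_ge0 L_growth fC f_ball alpha_gt0
  eps Reps eps_gt0 Reps_gt0 Reps_le.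
pose w u := expR (- alpha * L u); pose e0 := w ustar.
pose K := e0 * expR (- alpha * (eta * Reps + lmax * Reps ^+ 2)).
have D_ge0 u : 0 <= eucl_dist u ustar := eucl_dist_ge0 u ustar.
have w_le := gibbs_weight_le (D := fun u => eucl_dist u ustar)
  (ltW alpha_gt0) (ltW lmin_gt0) L_growth.
have w_ge := gibbs_weight_ge (ltW alpha_gt0) (ltW lmax_gt0) eta_ge0 D_ge0 L_growth.
have ball_gt0 : 0 < fine (f (eucl_ball ustar Reps)).
  apply: fine_gt0; rewrite f_ball //=.
  exact: le_lt_trans (probability_le1 f (measurable_eucl_ball _ _)) (ltey _).
have -> : consensus_point f L alpha = weighted_mean f w by [].
apply: (weighted_mean_dist_le_ball (v := ustar) (K := K) (measurable_ubox umin umax) fC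
  _ _ _ _ (measurable_eucl_ball ustar Reps) _ _ _ ball_gt0 _ (w_ge Reps)).
- by move=> u i; exact: ubox_norm_le.
- by apply: measurableT_comp; [exact: measurable_expR | exact: measurable_funM].
- by move=> u _; exact: expR_ge0.
- by move=> u box_u; exact: w_le 0 u box_u (lexx 0) (D_ge0 u).
- by rewrite divr_ge0 // ltW.
- exact: expR_ge0.
- by rewrite mulr_gt0 // expR_gt0.
move=> u box_u /ltW rD; apply: le_trans (w_le _ u box_u _ rD) _.
  by rewrite divr_ge0 // ltW.
rewrite /K [leRHS]mulrCA ler_pM2l ?expR_gt0 //.
exact: radius_exponent_gap lmin_gt0 lmax_gt0 eta_ge0 (ltW alpha_gt0) Reps_gt0 Reps_le.
Qed.
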